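(* Let $\mathcal P$ be a family of subsets of a set $X$ with $\mathcal P\subseteq\mathcal P_{seq}$. Then the $\mathcal Q_{\mathcal P}$-topology on $X/\mathcal P$ is Hausdorff.
   Context: $[x]_{\mathcal P}=\{y\in X:\forall V\in\mathcal P\ (x\in V\iff y\in V)\}$, $X/\mathcal P=\{[x]_{\mathcal P}:x\in X\}$, $q(x)=[x]_{\mathcal P}$, and the $\mathcal Q_{\mathcal P}$-topology is the coarsest topology on $X/\mathcal P$ containing all sets $q[V]$, $V\in\mathcal P$. $\mathcal P_{seq}$ is the family of all sets $W$ for which there exist $\{U_n\}_{n\in\omega},\{V_n\}_{n\in\omega}\subseteq\mathcal P$ with $U_k\subseteq X\setminus V_k\subseteq U_{k+1}$ for every $k$ and $\bigcup_nU_n=W$. *)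

From mathcomp Require Import all_boot.
From mathcomp Require Import boolp classical_sets.
Set Implicit Arguments. Unset Strict Implicit. Unset Printing Implicit Defensive.
Local Open Scope classical_set_scope.

Section QDefs.
Variable T : Type.
Implicit Types (P : set (set T)).

Definition cls P (x : T) : set T :=
  [set y | forall V, P V -> (V x <-> V y)].

Definition quot P : set (set T) := [set c | exists x, c = cls P x].

Definition qmap P (x : T) : set T := cls P x.

Definition is_topology {U : Type} (S : set U) (tau : set (set U)) : Prop :=
  [/\ (forall O, tau O -> O `<=` S),
      tau S,
      (forall F : set (set U), F `<=` tau -> tau (\bigcup_(O in F) O))
    & (forall A B, tau A -> tau B -> tau (A `&` B))].

(* open sets of the Q_P-topology: the coarsest topology on X/P containing all q[V], V in P *)
Definition Q_open P (O : set (set T)) : Prop :=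
  forall tau, is_topology (quot P) tau ->
    (forall V, P V -> tau (qmap P @` V)) -> tau O.

Definition P_seq P : set (set T) :=
  [set W | exists U V : nat -> set T,
     (forall n, P (U n) /\ P (V n)) /\
     (forall k, U k `<=` ~` V k /\ ~` V k `<=` U k.+1) /\
     \bigcup_n U n = W].

End QDefs.

Definition hausdorff {U : Type} (S : set U) (tau : set (set U)) : Prop :=
  forall a b, S a -> S b -> a <> b ->
    exists O1 O2, [/\ tau O1, tau O2, O1 a, O2 b & O1 `&` O2 = set0].

(* Two points of X/P with distinct classes are told apart by some V in P,
   say x in V and y notin V. Since V lies in P_seq, x lies in some U_n while
   y lies outside U_(n+1), hence in V_n; U_n and V_n are disjoint members of
   P. Members of P are unions of classes, so the images q[U_n] and q[V_n] are
   disjoint basic open sets separating [x] and [y]. *)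
From mathcomp Require Import all_boot.
From mathcomp Require Import boolp classical_sets.
Set Implicit Arguments. Unset Strict Implicit. Unset Printing Implicit Defensive.
Local Open Scope classical_set_scope.

Section QuotientSeparation.
Variables (T : Type) (P : set (set T)).

Lemma cls_refl x : cls P x x.
Proof. by move=> V _. Qed.

Lemma Q_open_qmap_image V : P V -> Q_open P (qmap P @` V).
Proof. by move=> PV tau _; apply. Qed.

Lemma qmap_image_disjoint A B :
  P B -> A `&` B = set0 -> qmap P @` A `&` qmap P @` B = set0.
Proof.
move=> PB AB0; apply/seteqP; split=> // _ [[a Aa <-] [b Bb qab]].
have ba : cls P b a by rewrite [cls P b]qab; apply: cls_refl.
have : (A `&` B) a by split=> //; apply/(ba B PB).
by rewrite AB0.
Qed.

Lemma cls_neq_separating x y : cls P x <> cls P y ->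
  exists2 V, P V & V x <-> ~ V y.
Proof.
move=> nxy; apply: contrapT => noV; apply: nxy.
have xy V : P V -> V x = V y.
  move=> PV; apply: contrapT => nxyV; apply: noV; exists V => //.
  split=> [Vx Vy | nVy]; first by apply: nxyV; apply/propext.
  by apply: contrapT => nVx; apply: nxyV; apply/propext.
by apply/seteqP; split=> z xz V PV; [rewrite -(xy V PV) | rewrite (xy V PV)];
  exact: xz.
Qed.

Lemma P_seq_separate W x y : P_seq P W -> W x -> ~ W y ->
  exists U V, [/\ P U, P V, U x, V y & U `&` V = set0].
Proof.
move=> [U [V [PUV [chain <-]]]] [n _ Unx] nWy.
have [PUn PVn] := PUV n.
exists (U n), (V n); split=> //.
- apply: contrapT => nVy; apply: nWy; exists n.+1 => //.
  exact: (chain n).2.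
- by apply/seteqP; split=> // z [Uz Vz]; exact: (chain n).1 z Uz Vz.
Qed.

Lemma Q_open_separate x y W : P_seq P W -> W x -> ~ W y ->
  exists O1 O2, [/\ Q_open P O1, Q_open P O2, O1 (cls P x), O2 (cls P y)
                  & O1 `&` O2 = set0].
Proof.
move=> PseqW Wx nWy.
have [U [V [PU PV Ux Vy UV0]]] := P_seq_separate PseqW Wx nWy.
exists (qmap P @` U), (qmap P @` V); split.
- exact: Q_open_qmap_image.
- exact: Q_open_qmap_image.
- by exists x.
- by exists y.
- exact: qmap_image_disjoint.
Qed.

End QuotientSeparation.

Theorem lemma3 (T : Type) (P : set (set T)) :
  P `<=` P_seq P -> hausdorff (quot P) (Q_open P).
Proof.
move=> PPseq _ _ [x ->] [y ->] nxy.
have [V PV Vxy] := cls_neq_separating nxy.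
have [Vx | nVx] := pselect (V x).
  exact: Q_open_separate (PPseq V PV) Vx (Vxy.1 Vx).
have Vy : V y by apply: contrapT => nVy; apply: nVx; exact: Vxy.2.
have [Oy [Ox [? ? ? ? OyOx0]]] := Q_open_separate (PPseq V PV) Vy nVx.
by exists Ox, Oy; split=> //; rewrite setIC.
Qed.
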